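(* Let $n\ge3$ and let $x^\Lambda\partial_k,x^\Theta\partial_u\in\mathcal{B}$ with $[x^\Lambda\partial_k,x^\Theta\partial_u]\ne0$. Then for every integer $i\ge-1$, \[\mathrm{lev}_i([x^\Lambda\partial_k,x^\Theta\partial_u])=\mathrm{lev}_i(x^\Lambda\partial_k)+\mathrm{lev}_i(x^\Theta\partial_u)-h_i(n-1)\] and \[\mathrm{WD}([x^\Lambda\partial_k,x^\Theta\partial_u])=\mathrm{WD}(x^\Lambda\partial_k)+\mathrm{WD}(x^\Theta\partial_u)-(n-1).\] Moreover, if $\mathrm{lev}_i(x^\Lambda\partial_k)\le i$ and $\mathrm{lev}_j(x^\Theta\partial_u)\le j$ for some $i,j\ge-1$, then \[\mathrm{WD}([x^\Lambda\partial_k,x^\Theta\partial_u])\le\min\bigl(\mathrm{WD}(x^\Lambda\partial_k),\mathrm{WD}(x^\Theta\partial_u)\bigr),\] with equality if and only if one of $x^\Lambda\partial_k$, $x^\Theta\partial_u$ equals $\partial_1$.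
   Context: Fix an integer $n\ge 3$. A partition is a sequence $\Lambda=(\lambda_j)_{j\ge1}$ of non-negative integers with finite support; $\mathrm{wt}(\Lambda)=\sum_j j\lambda_j$; $\mathrm{Part}(k)$ is the set of partitions with $\lambda_j=0$ for $j>k$. Write $x^\Lambda=\prod_j x_j^{\lambda_j}$, $\deg(x^\Lambda)=\sum_j\lambda_j$, and let $\partial_k$ be the partial derivative with respect to $x_k$. $\mathfrak{L}(n)$ is the free $\mathbb{Z}$-module with basis $\mathcal{B}=\{x^\Lambda\partial_k : 1\le k\le n,\ \Lambda\in\mathrm{Part}(k-1)\}$, a Lie ring with bracket defined on basis elements by $[x^\Lambda\partial_k,x^\Theta\partial_j]=\partial_j(x^\Lambda)x^\Theta\partial_k$ if $j<k$, $-x^\Lambda\partial_k(x^\Theta)\partial_j$ if $j>k$, $0$ if $j=k$, extended bilinearly; thus a nonzero bracket of two basis elements is $c\cdot x^\Gamma\partial_v$ for a nonzero integer $c$ and $x^\Gamma\partial_v\in\mathcal{B}$. For an integer $i\ge-1$, let $r_i\in\{1,\dots,n-1\}$ with $i\equiv r_i\pmod{n-1}$ and $h_i=\lfloor (i-1)/(n-1)\rfloor+1$. For a nonzero integer $c$ and $x^\Lambda\partial_k\in\mathcal{B}$ define $\mathrm{WD}(c\,x^\Lambda\partial_k)=\mathrm{wt}(\Lambda)-\deg(x^\Lambda)+n-k$ and $\mathrm{lev}_i(c\,x^\Lambda\partial_k)=h_i\,\mathrm{WD}(x^\Lambda\partial_k)+\deg(x^\Lambda)-1$. *)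

From mathcomp Require Import all_boot all_order all_algebra.
Set Implicit Arguments. Unset Strict Implicit. Unset Printing Implicit Defensive.
Import Order.TTheory GRing.Theory Num.Theory.
Local Open Scope ring_scope.

(* A partition Lambda = (lambda_j)_{j>=1} is represented by a function
   L : nat -> nat, with L j = lambda_j for j >= 1; the unused entry L 0 is
   required to be 0 so that the representation is canonical. *)
Definition mono := nat -> nat.

Definition inPart (m : nat) (L : mono) : Prop :=
  forall j : nat, ((j == 0)%N || (m < j)%N) -> L j = 0%N.

Definition is_basis (n : nat) (L : mono) (k : nat) : Prop :=
  (1 <= k <= n)%N /\ inPart k.-1 L.

Definition wt (m : nat) (L : mono) : nat := (\sum_(1 <= j < m.+1) j * L j)%N.
Definition deg (m : nat) (L : mono) : nat := (\sum_(1 <= j < m.+1) L j)%N.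

Definition WD (n : nat) (L : mono) (k : nat) : int :=
  (wt k.-1 L)%:Z - (deg k.-1 L)%:Z + n%:Z - k%:Z.

Definition h (n : nat) (i : int) : int := ((i - 1) %/ (n%:Z - 1))%Z + 1.

Definition lev (n : nat) (i : int) (L : mono) (k : nat) : int :=
  h n i * WD n L k + (deg k.-1 L)%:Z - 1.

(* Result of a bracket of two basis elements: c * x^Gamma d_v. *)
Record bres := Bres { coef : int; gam : mono; vidx : nat }.

(* [x^L d_k, x^T d_u] =
     d_u(x^L) x^T d_k          if u < k   ( = lambda_u x^(L - e_u + T) d_k )
   - x^L d_k(x^T) d_u          if u > k   ( = - theta_k x^(L + T - e_k) d_u )
     0                         if u = k *)
Definition bracket (L : mono) (k : nat) (T : mono) (u : nat) : bres :=
  if (u < k)%N then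
    Bres (L u)%:Z (fun j => (L j - (j == u) + T j)%N) k
  else if (k < u)%N then
    Bres (- (T k)%:Z) (fun j => (L j + (T j - (j == k)))%N) u
  else Bres 0 L k.

Definition is_d1 (L : mono) (k : nat) : Prop := k = 1%N /\ (forall j, L j = 0%N).

From mathcomp Require Import all_boot all_order all_algebra zify ring lra.
Set Implicit Arguments. Unset Strict Implicit. Unset Printing Implicit Defensive.
Import Order.TTheory GRing.Theory Num.Theory.
Local Open Scope ring_scope.

(* A nonzero bracket deletes one variable x_v from one factor and multiplies
   by the other, so weight and degree of the result are additive up to that
   variable; hence WD and deg of the bracket are sums minus constants, and the
   level identity is linear.  For the inequality, lev_i <= i forces
   WD <= n - 1 with equality only at d_1: since i <= h_i (n - 1), a monomial
   of degree >= 2 has h_i WD < h_i (n - 1); degree 1 gives WD <= n - 2 as the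
   weight is at most k - 1; degree 0 gives WD = n - k. *)

Definition wsum (w : nat -> nat) (m : nat) (L : mono) : nat :=
  (\sum_(1 <= j < m.+1) w j * L j)%N.

Lemma wtE m L : wt m L = wsum id m L.
Proof. by []. Qed.

Lemma degE m L : deg m L = wsum (fun=> 1%N) m L.
Proof. by apply: eq_bigr => j _; rewrite mul1n. Qed.

Lemma eq_wsum w m A B : (forall j, A j = B j) -> wsum w m A = wsum w m B.
Proof. by move=> eqAB; apply: eq_bigr => j _; rewrite eqAB. Qed.

Lemma wsumD w m A B :
  wsum w m (fun j => A j + B j)%N = (wsum w m A + wsum w m B)%N.
Proof. by rewrite /wsum -big_split; apply: eq_bigr => j _; rewrite mulnDr. Qed.

Lemma wsum_widen w m p L : inPart m L -> (m <= p)%N -> wsum w p L = wsum w m L.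
Proof.
move=> Lm le_mp; rewrite /wsum (@big_cat_nat _ _ _ m.+1) //=.
rewrite [X in (_ + X)%N]big1_seq ?addn0 // => j /andP[_].
by rewrite mem_iota => /andP[lt_mj _]; rewrite Lm ?muln0 //; apply/orP; right.
Qed.

Lemma wsum_subn_delta w m v L : (1 <= v <= m)%N -> (0 < L v)%N ->
  (wsum w m (fun j => L j - (j == v)) + w v)%N = wsum w m L.
Proof.
move=> v_in Lv_gt0.
have wv : (\sum_(1 <= j < m.+1) w j * (j == v))%N = w v.
  have v_iota : v \in index_iota 1 m.+1 by rewrite mem_iota; lia.
  rewrite (bigD1_seq v v_iota (iota_uniq _ _)) /= eqxx muln1.
  by rewrite big1 ?addn0 // => j /negbTE ->; rewrite muln0.
rewrite -wv /wsum -big_split; apply: eq_bigr => j _ /=; rewrite -mulnDr.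
by case: eqP => [->|_]; congr (_ * _)%N; lia.
Qed.

Lemma wsum_merge w m p v A B : inPart p B -> (p <= m)%N ->
  (1 <= v <= m)%N -> (0 < A v)%N ->
  (wsum w m (fun j => A j - (j == v) + B j) + w v = wsum w m A + wsum w p B)%N.
Proof.
move=> Bp le_pm v_in Av_gt0.
rewrite wsumD (wsum_widen w Bp le_pm) -(wsum_subn_delta w v_in Av_gt0); lia.
Qed.

Lemma wt_le_mul_deg m L : (wt m L <= m * deg m L)%N.
Proof.
rewrite /deg /wt big_distrr !big_nat; apply: leq_sum => j /andP[_ lt_jm].
by rewrite leq_mul2r -ltnS lt_jm orbT.
Qed.

Lemma bracket_deg_WD n L k T u : inPart k.-1 L -> inPart u.-1 T ->
  coef (bracket L k T u) != 0 ->
  (deg (vidx (bracket L k T u)).-1 (gam (bracket L k T u)))%:Z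
     = (deg k.-1 L)%:Z + (deg u.-1 T)%:Z - 1 /\
  WD n (gam (bracket L k T u)) (vidx (bracket L k T u))
     = WD n L k + WD n T u - (n%:Z - 1).
Proof.
rewrite /bracket /WD !degE !wtE => Lk Tu.
case: ltnP => [lt_uk|le_ku] /=.
  move=> Lu_neq0; have Lu_gt0 : (0 < L u)%N by lia.
  have u_neq0 : u != 0%N by apply: contraTneq Lu_gt0 => ->; rewrite Lk.
  have u_in : (1 <= u <= k.-1)%N by lia.
  have le_pred_uk : (u.-1 <= k.-1)%N by lia.
  have := wsum_merge id Tu le_pred_uk u_in Lu_gt0.
  have := wsum_merge (fun=> 1%N) Tu le_pred_uk u_in Lu_gt0.
  lia.
case: ltnP => [lt_ku|_] //=.
move=> Tk_neq0; have Tk_gt0 : (0 < T k)%N by lia.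
have k_neq0 : k != 0%N by apply: contraTneq Tk_gt0 => ->; rewrite Tu.
have k_in : (1 <= k <= u.-1)%N by lia.
have le_pred_ku : (k.-1 <= u.-1)%N by lia.
have comm j : (L j + (T j - (j == k)) = T j - (j == k) + L j)%N by rewrite addnC.
rewrite !(eq_wsum _ _ comm).
have := wsum_merge id Lk le_pred_ku k_in Tk_gt0.
have := wsum_merge (fun=> 1%N) Lk le_pred_ku k_in Tk_gt0.
lia.
Qed.

Lemma h_ge0 n i : (3 <= n)%N -> -1 <= i -> 0 <= h n i.
Proof.
move=> n_ge3 i_ge; rewrite /h -lerBlDr sub0r lez_divRL; lia.
Qed.

Lemma le_h_mul n i : (2 <= n)%N -> i <= h n i * (n%:Z - 1).
Proof.
move=> n_ge2; have m_neq0 : n%:Z - 1 != 0 by lia.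
have := divz_eq (i - 1) (n%:Z - 1); have := ltz_mod (i - 1) m_neq0.
rewrite gtr0_norm /h; [nia | lia].
Qed.

Lemma WD_deg0 n L k : deg k.-1 L = 0%N -> WD n L k = n%:Z - k%:Z.
Proof. by move=> deg0; have := wt_le_mul_deg k.-1 L; rewrite /WD deg0; lia. Qed.

Lemma WD_le_of_lev_deg_gt0 n L k i : (3 <= n)%N -> (0 < k)%N -> -1 <= i ->
  lev n i L k <= i -> (0 < deg k.-1 L)%N -> WD n L k <= n%:Z - 2.
Proof.
rewrite /lev => n_ge3 k_gt0 i_ge lev_le deg_gt0.
have h_nneg := h_ge0 n_ge3 i_ge; have le_i_h := le_h_mul i (ltnW n_ge3).
case: (ltngtP (deg k.-1 L) 1) => [|deg_gt1|deg1]; [lia | nia |].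
by have := wt_le_mul_deg k.-1 L; rewrite /WD deg1; lia.
Qed.

Lemma WD_le_of_lev n L k i : (3 <= n)%N -> is_basis n L k -> -1 <= i ->
  lev n i L k <= i -> WD n L k <= n%:Z - 1 /\ (WD n L k = n%:Z - 1 <-> is_d1 L k).
Proof.
move=> n_ge3 [k_in Lk] i_ge lev_le.
have d1E : is_d1 L k <-> k = 1%N.
  by split=> [[]//|k1]; split=> // j; apply: Lk; rewrite k1; case: j.
rewrite d1E; case: (posnP (deg k.-1 L)) => [deg0|deg_gt0].
  rewrite WD_deg0 //; lia.
have k_neq1 : k <> 1%N by move=> k1; move: deg_gt0; rewrite k1 /deg big_geq.
have k_gt0 : (0 < k)%N by case/andP: k_in.
by have := WD_le_of_lev_deg_gt0 n_ge3 k_gt0 i_ge lev_le deg_gt0; lia.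
Qed.

Lemma addrB_le_min (R : realDomainType) (a b c : R) : a <= c -> b <= c ->
  a + b - c <= Num.min a b /\ (a + b - c = Num.min a b <-> a = c \/ b = c).
Proof.
move=> le_ac le_bc; rewrite minEle.
case: ifP => le_ab; split; try lra; split; try lra; case; lra.
Qed.

Theorem proposition2p3 (n : nat) (L : mono) (k : nat) (T : mono) (u : nat) :
  (3 <= n)%N -> is_basis n L k -> is_basis n T u ->
  coef (bracket L k T u) != 0 ->
  (forall i : int, -1 <= i ->
     lev n i (gam (bracket L k T u)) (vidx (bracket L k T u))
     = lev n i L k + lev n i T u - h n i * (n%:Z - 1)) /\
  WD n (gam (bracket L k T u)) (vidx (bracket L k T u))
     = WD n L k + WD n T u - (n%:Z - 1) /\
  (forall i j : int, -1 <= i -> -1 <= j ->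
     lev n i L k <= i -> lev n j T u <= j ->
     WD n (gam (bracket L k T u)) (vidx (bracket L k T u))
       <= Num.min (WD n L k) (WD n T u) /\
     (WD n (gam (bracket L k T u)) (vidx (bracket L k T u))
       = Num.min (WD n L k) (WD n T u) <-> is_d1 L k \/ is_d1 T u)).
Proof.
move=> n_ge3 BL BT coef_neq0.
have [deg_bracket WD_bracket] := bracket_deg_WD n BL.2 BT.2 coef_neq0.
split=> [i _|]; first by rewrite /lev deg_bracket WD_bracket; ring.
split=> // i j i_ge j_ge levL levT.
have [WDL_le WDL_eq] := WD_le_of_lev n_ge3 BL i_ge levL.
have [WDT_le WDT_eq] := WD_le_of_lev n_ge3 BT j_ge levT.
by rewrite WD_bracket -WDL_eq -WDT_eq; apply: addrB_le_min.
Qed.
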